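(* Let $X$ be a Banach space, $F\colon X\to\mathbb{R}$ locally Lipschitz at $\bar x\in X$, $(u,v)\in X\times X$, and let $\{(t_k,v^k)\}\subset(0,\infty)\times X$ with $t_k\downarrow 0$, $v^k\to v$, and $F\left(\bar x+t_ku+\tfrac12t_k^2v^k\right)\geqq F(\bar x)$ for all $k\in\mathbb{N}$. If $F^{\circ}(\bar x,u)=0$, then $F^{\circ}(\bar x,v)+F^{\circ\circ}(\bar x,u)\geqq 0$.
   Context: $F$ is locally Lipschitz at $\bar x$ if there are a neighborhood $U$ of $\bar x$ and $L\geqq 0$ with $|F(x)-F(y)|\leqq L\|x-y\|$ for all $x,y\in U$. Clarke's generalized directional derivative: $F^{\circ}(\bar x,u):=\limsup_{x\to\bar x,\ t\downarrow 0}\frac{F(x+tu)-F(x)}{t}$ (finite). Second-order upper generalized directional derivative: $F^{\circ\circ}(\bar x,u):=\limsup_{t\downarrow 0}\frac{F(\bar x+tu)-F(\bar x)-tF^{\circ}(\bar x,u)}{\frac12 t^2}$ (a value in $[-\infty,+\infty]$). *)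

From Stdlib Require Import Reals Lra.
Open Scope R_scope.

Record BanachSpace := {
  carrier :> Type;
  vplus : carrier -> carrier -> carrier;
  vscal : R -> carrier -> carrier;
  vzero : carrier;
  vopp : carrier -> carrier;
  vnorm : carrier -> R;
  vplus_assoc : forall x y z, vplus x (vplus y z) = vplus (vplus x y) z;
  vplus_comm : forall x y, vplus x y = vplus y x;
  vplus_zero : forall x, vplus x vzero = x;
  vplus_opp : forall x, vplus x (vopp x) = vzero;
  vscal_assoc : forall a b x, vscal a (vscal b x) = vscal (a * b) x;
  vscal_one : forall x, vscal 1 x = x;
  vscal_distr_v : forall a x y, vscal a (vplus x y) = vplus (vscal a x) (vscal a y);
  vscal_distr_s : forall a b x, vscal (a + b) x = vplus (vscal a x) (vscal b x);
  vnorm_zero : forall x, vnorm x = 0 -> x = vzero;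
  vnorm_scal : forall a x, vnorm (vscal a x) = Rabs a * vnorm x;
  vnorm_triangle : forall x y, vnorm (vplus x y) <= vnorm x + vnorm y;
  vcomplete : forall u : nat -> carrier,
    (forall eps, eps > 0 -> exists N, forall n m, (n >= N)%nat -> (m >= N)%nat ->
        vnorm (vplus (u n) (vopp (u m))) < eps) ->
    exists l, forall eps, eps > 0 -> exists N, forall n, (n >= N)%nat ->
        vnorm (vplus (u n) (vopp l)) < eps
}.

Arguments vplus {_}. Arguments vscal {_}. Arguments vzero {_}.
Arguments vopp {_}. Arguments vnorm {_}.

Definition vminus {X : BanachSpace} (x y : X) : X := vplus x (vopp y).

Definition vseq_cv {X : BanachSpace} (u : nat -> X) (l : X) : Prop :=
  forall eps, eps > 0 -> exists N, forall n, (n >= N)%nat -> vnorm (vminus (u n) l) < eps.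

Definition locally_lipschitz {X : BanachSpace} (F : X -> R) (xbar : X) : Prop :=
  exists delta L, delta > 0 /\ L >= 0 /\
    forall x y, vnorm (vminus x xbar) < delta -> vnorm (vminus y xbar) < delta ->
      Rabs (F x - F y) <= L * vnorm (vminus x y).

(* c = F°(xbar,u) = limsup_{x -> xbar, t ↓ 0} (F(x+tu) - F(x))/t  (finite value) *)
Definition is_clarke_dd {X : BanachSpace} (F : X -> R) (xbar u : X) (c : R) : Prop :=
  (forall eps, eps > 0 -> exists delta, delta > 0 /\
     forall x t, vnorm (vminus x xbar) < delta -> 0 < t < delta ->
       (F (vplus x (vscal t u)) - F x) / t <= c + eps) /\
  (forall eps delta, eps > 0 -> delta > 0 -> exists x t,
     vnorm (vminus x xbar) < delta /\ 0 < t < delta /\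
     c - eps < (F (vplus x (vscal t u)) - F x) / t).

Inductive Rbar := Finite (r : R) | p_infty | m_infty.

Definition is_limsup_0 (g : R -> R) (l : Rbar) : Prop :=
  match l with
  | Finite c =>
      (forall eps, eps > 0 -> exists delta, delta > 0 /\
         forall t, 0 < t < delta -> g t <= c + eps) /\
      (forall eps delta, eps > 0 -> delta > 0 -> exists t, 0 < t < delta /\ c - eps < g t)
  | p_infty => forall M delta, delta > 0 -> exists t, 0 < t < delta /\ M < g t
  | m_infty => forall M, exists delta, delta > 0 /\ forall t, 0 < t < delta -> g t <= M
  end.

(* l = F°°(xbar,u), given c = F°(xbar,u) *)
Definition is_second_dd {X : BanachSpace} (F : X -> R) (xbar u : X) (c : R) (l : Rbar) : Prop :=
  is_limsup_0 (fun t => (F (vplus xbar (vscal t u)) - F xbar - t * c) / (/2 * t ^ 2)) l.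

Definition Rbar_sum_nonneg (a : R) (l : Rbar) : Prop :=
  match l with
  | Finite c => 0 <= a + c
  | p_infty => True
  | m_infty => False
  end.

(* Along the points x_k = x̄ + t_k u + ½t_k² v_k, split
     F(x_k) - F(x̄) = [F(x_k) - F(z_k)] + [F(z_k) - F(y_k)] + [F(y_k) - F(x̄)]
   with y_k = x̄ + t_k u and z_k = y_k + ½t_k² v.  The first bracket is o(t_k²)
   by the Lipschitz property since v_k -> v, the second is at most
   ½t_k² (F°(x̄,v) + ε) by the definition of the Clarke derivative at the
   nearby point y_k, and the third is at most ½t_k² (F°°(x̄,u) + ε) for small
   t_k.  As the left-hand side is nonnegative, dividing by ½t_k² gives the
   claim up to ε. *)

From Stdlib Require Import Reals Lra.
Open Scope R_scope.

Lemma Rmult_lt_of_lt_div (a b c : R) : 0 < c -> a < b / c -> a * c < b.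
Proof.
  intros Hc H.
  apply (Rmult_lt_compat_r c) in H; [| exact Hc].
  unfold Rdiv in H; rewrite Rmult_assoc, Rinv_l, Rmult_1_r in H by lra.
  exact H.
Qed.

Lemma Rle_mult_of_div_le (a b s : R) : 0 < s -> a / s <= b -> a <= s * b.
Proof.
  intros Hs H.
  apply (Rmult_le_compat_l s) in H; [| lra].
  unfold Rdiv in H.
  rewrite (Rmult_comm a), <- Rmult_assoc, Rinv_r, Rmult_1_l in H by lra.
  exact H.
Qed.

Lemma slope_chain_nonneg (a0 a1 a2 a3 s eps c B : R) :
  0 < s -> a0 <= a3 -> a3 - a2 <= s * eps ->
  (a2 - a1) / s <= c + eps -> (a1 - a0) / s <= B ->
  0 <= c + B + 2 * eps.
Proof.
  intros Hs H03 H23 H12 H01.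
  apply Rle_mult_of_div_le in H12, H01; try exact Hs.
  assert (0 <= s * (c + B + 2 * eps)) by nra.
  nra.
Qed.

Section VectorAlgebra.

Variable X : BanachSpace.

Lemma vplus_0_l (x : X) : vplus vzero x = x.
Proof. rewrite vplus_comm; apply vplus_zero. Qed.

Lemma vplus_reg_l (a b c : X) : vplus a b = vplus a c -> b = c.
Proof.
  intro H.
  assert (Hcancel : forall y, vplus (vopp a) (vplus a y) = y).
  { intro y. rewrite vplus_assoc, (vplus_comm _ (vopp a) a), vplus_opp. apply vplus_0_l. }
  rewrite <- (Hcancel b), <- (Hcancel c), H; reflexivity.
Qed.

Lemma vscal_0_l (x : X) : vscal 0 x = vzero.
Proof.
  apply (vplus_reg_l (vscal 0 x)).
  rewrite <- vscal_distr_s, vplus_zero, Rplus_0_r; reflexivity.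
Qed.

Lemma vopp_unique (a b : X) : vplus a b = vzero -> b = vopp a.
Proof.
  intro H.
  rewrite <- (vplus_0_l b), <- (vplus_opp _ a), (vplus_comm _ a),
    <- vplus_assoc, H, vplus_zero; reflexivity.
Qed.

Lemma vopp_scal_m1 (x : X) : vopp x = vscal (-1) x.
Proof.
  symmetry; apply vopp_unique.
  rewrite <- (vscal_one _ x) at 1.
  rewrite <- vscal_distr_s, Rplus_opp_r; apply vscal_0_l.
Qed.

Lemma vscal_opp (a : R) (x : X) : vscal a (vopp x) = vopp (vscal a x).
Proof. rewrite !vopp_scal_m1, !vscal_assoc; f_equal; ring. Qed.

Lemma vopp_plus (x y : X) : vopp (vplus x y) = vplus (vopp x) (vopp y).
Proof. rewrite !vopp_scal_m1; apply vscal_distr_v. Qed.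

Lemma vplus_swap_middle (a b c d : X) :
  vplus (vplus a b) (vplus c d) = vplus (vplus a c) (vplus b d).
Proof.
  rewrite <- !vplus_assoc; f_equal.
  rewrite !vplus_assoc; f_equal; apply vplus_comm.
Qed.

Lemma vminus_plus_l (x y : X) : vminus (vplus x y) x = y.
Proof.
  unfold vminus.
  rewrite (vplus_comm _ x), <- vplus_assoc, vplus_opp; apply vplus_zero.
Qed.

Lemma vnorm_nonneg (x : X) : 0 <= vnorm x.
Proof.
  assert (Hnorm0 : vnorm (@vzero X) = 0).
  { rewrite <- (vscal_0_l vzero), vnorm_scal, Rabs_R0; ring. }
  pose proof (vnorm_triangle _ x (vopp x)) as Htri.
  rewrite vplus_opp, Hnorm0, vopp_scal_m1, vnorm_scal in Htri.
  replace (Rabs (-1)) with 1 in Htri by (rewrite Rabs_left; lra).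
  lra.
Qed.

Lemma vnorm_le_minus_plus (w z : X) : vnorm w <= vnorm (vminus w z) + vnorm z.
Proof.
  replace w with (vplus (vminus w z) z) at 1 by
    (unfold vminus; rewrite <- vplus_assoc, (vplus_comm _ (vopp z)), vplus_opp,
       vplus_zero; reflexivity).
  apply vnorm_triangle.
Qed.

End VectorAlgebra.

Definition parabolic_point {X : BanachSpace} (x a w : X) (t : R) : X :=
  vplus x (vplus (vscal t a) (vscal (/2 * t ^ 2) w)).

Section ParabolicPoints.

Variable X : BanachSpace.
Implicit Types x a w z : X.

Lemma parabolic_point_assoc x a w t :
  parabolic_point x a w t = vplus (vplus x (vscal t a)) (vscal (/2 * t ^ 2) w).
Proof. apply vplus_assoc. Qed.

Lemma parabolic_point_minus x a w z t :
  vminus (parabolic_point x a w t) (parabolic_point x a z t)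
  = vscal (/2 * t ^ 2) (vminus w z).
Proof.
  unfold parabolic_point, vminus.
  rewrite !vopp_plus, vplus_swap_middle, vplus_opp, vplus_0_l,
    vplus_swap_middle, vplus_opp, vplus_0_l, <- vscal_opp, vscal_distr_v.
  reflexivity.
Qed.

Lemma vnorm_parabolic_point_lt x a w t r :
  0 < t <= 1 -> t * (vnorm a + vnorm w) < r ->
  vnorm (vminus (parabolic_point x a w t) x) < r.
Proof.
  intros Ht Hr.
  unfold parabolic_point; rewrite vminus_plus_l.
  eapply Rle_lt_trans; [apply vnorm_triangle |].
  rewrite !vnorm_scal, !Rabs_pos_eq by nra.
  pose proof (vnorm_nonneg X w).
  assert (/2 * t ^ 2 <= t) by nra.
  assert (/2 * t ^ 2 * vnorm w <= t * vnorm w) by (apply Rmult_le_compat_r; lra).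
  lra.
Qed.

Lemma lipschitz_parabolic_gap (F : X -> R) x a w z t dL L eps :
  (forall x1 x2, vnorm (vminus x1 x) < dL -> vnorm (vminus x2 x) < dL ->
     Rabs (F x1 - F x2) <= L * vnorm (vminus x1 x2)) ->
  0 < t <= 1 -> t * (vnorm a + vnorm w) < dL -> t * (vnorm a + vnorm z) < dL ->
  L * vnorm (vminus w z) <= eps ->
  F (parabolic_point x a w t) - F (parabolic_point x a z t) <= /2 * t ^ 2 * eps.
Proof.
  intros HLip Ht Hw Hz HLeps.
  pose proof (HLip _ _ (vnorm_parabolic_point_lt x a w t dL Ht Hw)
                       (vnorm_parabolic_point_lt x a z t dL Ht Hz)) as Hgap.
  assert (Hs : 0 < /2 * t ^ 2) by nra.
  rewrite parabolic_point_minus, vnorm_scal, (Rabs_pos_eq (/2 * t ^ 2)) in Hgap by lra.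
  pose proof (Rle_abs (F (parabolic_point x a w t) - F (parabolic_point x a z t))).
  nra.
Qed.

Lemma clarke_parabolic_step (F : X -> R) x a z t c dv :
  (forall y tau, vnorm (vminus y x) < dv -> 0 < tau < dv ->
     (F (vplus y (vscal tau z)) - F y) / tau <= c) ->
  0 < t <= 1 -> t * vnorm a < dv -> t < dv ->
  (F (parabolic_point x a z t) - F (vplus x (vscal t a))) / (/2 * t ^ 2) <= c.
Proof.
  intros Hclarke Ht Ha Htdv.
  rewrite parabolic_point_assoc; apply Hclarke.
  - rewrite vminus_plus_l, vnorm_scal, Rabs_pos_eq by lra; exact Ha.
  - assert (/2 * t ^ 2 <= t) by nra.
    split; nra.
Qed.

End ParabolicPoints.

Section SecondOrderCondition.

Variables (X : BanachSpace) (F : X -> R) (xbar u v : X).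
Variables (t : nat -> R) (vk : nat -> X).
Hypothesis HF : locally_lipschitz F xbar.
Hypothesis Ht_pos : forall k, 0 < t k.
Hypothesis Ht_cv : Un_cv t 0.
Hypothesis Hv_cv : vseq_cv vk v.
Hypothesis Hineq : forall k, F xbar <= F (parabolic_point xbar u (vk k) (t k)).

Lemma exists_index_close (r eps L : R) :
  r > 0 -> eps > 0 -> L >= 0 ->
  exists k, t k * (1 + vnorm u + vnorm v) < r /\ vnorm (vminus (vk k) v) < 1 /\
            L * vnorm (vminus (vk k) v) <= eps.
Proof.
  intros Hr Heps HL.
  pose proof (vnorm_nonneg X u); pose proof (vnorm_nonneg X v).
  assert (HK : 0 < 1 + vnorm u + vnorm v) by lra.
  destruct (Ht_cv (r / (1 + vnorm u + vnorm v))) as [N1 HN1];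
    [apply Rdiv_lt_0_compat; lra |].
  destruct (Hv_cv (Rmin 1 (eps / (L + 1)))) as [N2 HN2];
    [apply Rmin_glb_lt; [lra | apply Rdiv_lt_0_compat; lra] |].
  set (k := Nat.max N1 N2).
  specialize (HN1 k (Nat.le_max_l _ _)); specialize (HN2 k (Nat.le_max_r _ _)).
  unfold Rdist in HN1; rewrite Rminus_0_r, Rabs_pos_eq in HN1 by (left; apply Ht_pos).
  pose proof (vnorm_nonneg X (vminus (vk k) v)).
  pose proof (Rmin_l 1 (eps / (L + 1))); pose proof (Rmin_r 1 (eps / (L + 1))).
  assert (vnorm (vminus (vk k) v) * (L + 1) < eps) by (apply Rmult_lt_of_lt_div; lra).
  exists k; repeat split; [apply Rmult_lt_of_lt_div; lra | lra | nra].
Qed.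

Lemma second_order_slope_bound (cv B eps : R) :
  is_clarke_dd F xbar v cv -> eps > 0 ->
  (exists d0, d0 > 0 /\ forall tau, 0 < tau < d0 ->
     (F (vplus xbar (vscal tau u)) - F xbar) / (/2 * tau ^ 2) <= B) ->
  0 <= cv + B + 2 * eps.
Proof.
  intros [Hclarke _] Heps [d0 [Hd0 Hsecond]].
  destruct HF as [dL [L [HdL [HL HLip]]]].
  destruct (Hclarke eps Heps) as [dv [Hdv Hv]].
  set (m := Rmin (Rmin 1 d0) (Rmin dv dL)).
  assert (Hm : 0 < m /\ m <= 1 /\ m <= d0 /\ m <= dv /\ m <= dL).
  { pose proof (Rmin_l (Rmin 1 d0) (Rmin dv dL)); pose proof (Rmin_r (Rmin 1 d0) (Rmin dv dL)).
    pose proof (Rmin_l 1 d0); pose proof (Rmin_r 1 d0).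
    pose proof (Rmin_l dv dL); pose proof (Rmin_r dv dL).
    assert (0 < m) by (unfold m; repeat apply Rmin_glb_lt; lra).
    unfold m in *; lra. }
  clearbody m.
  destruct (exists_index_close m eps L) as [k [HtK [Hnd HLnd]]]; [lra | lra | lra |].
  pose proof (Ht_pos k); pose proof (vnorm_nonneg X u); pose proof (vnorm_nonneg X v).
  pose proof (vnorm_le_minus_plus X (vk k) v).
  assert (Htm : t k < m) by nra.
  assert (Hnear : forall w : X, vnorm w <= vnorm v + 1 -> t k * (vnorm u + vnorm w) < dL).
  { intros w Hw.
    assert (t k * vnorm w <= t k * (vnorm v + 1)) by (apply Rmult_le_compat_l; lra).
    lra. }
  apply (slope_chain_nonneg (F xbar) (F (vplus xbar (vscal (t k) u)))
           (F (parabolic_point xbar u v (t k))) (F (parabolic_point xbar u (vk k) (t k)))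
           (/2 * t k ^ 2)).
  - nra.
  - apply Hineq.
  - apply (lipschitz_parabolic_gap X F xbar u (vk k) v (t k) dL L eps HLip);
      [lra | apply Hnear; lra | apply Hnear; lra | exact HLnd].
  - apply (clarke_parabolic_step X F xbar u v (t k) (cv + eps) dv Hv); [lra | nra | lra].
  - apply Hsecond; lra.
Qed.

End SecondOrderCondition.

Theorem lemma2 (X : BanachSpace) (F : X -> R) (xbar u v : X)
  (t : nat -> R) (vk : nat -> X)
  (HF : locally_lipschitz F xbar)
  (Ht_pos : forall k, 0 < t k)
  (Ht_cv : Un_cv t 0)
  (Hv_cv : vseq_cv vk v)
  (Hineq : forall k, F xbar <= F (vplus xbar (vplus (vscal (t k) u) (vscal (/2 * (t k) ^ 2) (vk k)))))
  (Hu : is_clarke_dd F xbar u 0) :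
  forall (cv : R) (l : Rbar),
    is_clarke_dd F xbar v cv ->
    is_second_dd F xbar u 0 l ->
    Rbar_sum_nonneg cv l.
Proof.
  intros cv l Hv Hl.
  pose proof (second_order_slope_bound X F xbar u v t vk HF Ht_pos Ht_cv Hv_cv Hineq cv)
    as Hbound.
  assert (Hquotient : forall B,
    (exists d, d > 0 /\ forall tau, 0 < tau < d ->
       (F (vplus xbar (vscal tau u)) - F xbar - tau * 0) / (/2 * tau ^ 2) <= B) ->
    exists d, d > 0 /\ forall tau, 0 < tau < d ->
       (F (vplus xbar (vscal tau u)) - F xbar) / (/2 * tau ^ 2) <= B).
  { intros B [d [Hd Hle]]; exists d; split; [exact Hd |].
    intros tau Htau; rewrite <- (Rminus_0_r (F _ - F xbar)), <- (Rmult_0_r tau).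
    exact (Hle tau Htau). }
  destruct l as [c | |]; simpl; [| exact I |].
  - destruct (Rle_dec 0 (cv + c)) as [| Hneg]; [assumption |].
    set (eps := - (cv + c) / 6).
    assert (Heps : eps > 0) by (unfold eps; lra).
    pose proof (Hbound (c + eps) eps Hv Heps (Hquotient _ (proj1 Hl eps Heps))).
    unfold eps in *; lra.
  - pose proof (Hbound (- cv - 3) 1 Hv Rlt_0_1 (Hquotient _ (Hl (- cv - 3)))).
    lra.
Qed.
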